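(* Let $V=V_0\uplus V_1\uplus\dots\uplus V_m$ be a partition of a vector configuration $V$ into subconfigurations. Then $\operatorname{codeg}^*(V)\ge\sum_{i=0}^m\operatorname{codeg}^*(V_i)$.
   Context: A vector configuration is a finite family (repetitions allowed) of vectors in $\mathbb{R}^r$; cardinalities count multiplicities. For a nonzero linear functional $f$ on $\mathbb{R}^r$ let $H=\{f=0\}$ and $\overline{H}^-=\{f\le0\}$. The dual codegree of a configuration $W$ is $\operatorname{codeg}^*(W)=\min_H|\overline{H}^-\cap W|$, the minimum over all such oriented linear hyperplanes $H$ of $\mathbb{R}^r$. *)

From HB Require Import structures.
From mathcomp Require Import all_boot all_order all_algebra.
From mathcomp Require Import boolp reals.
Set Implicit Arguments. Unset Strict Implicit. Unset Printing Implicit Defensive.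
Import Order.TTheory GRing.Theory Num.Theory.
Local Open Scope ring_scope.

(* A vector configuration in R^r: a finite family (with repetitions) of
   row vectors, represented as a sequence. Cardinalities count multiplicities. *)
Definition vconfig (R : realType) (r : nat) := seq 'rV[R]_r.

(* A linear functional on R^r is represented by its coefficient column
   f : 'cV_r, acting as v |-> (v *m f) 0 0.  It is nonzero iff f != 0. *)
Definition fval (R : realType) (r : nat) (f : 'cV[R]_r) (v : 'rV[R]_r) : R :=
  (v *m f) 0 0.

Definition neg_count (R : realType) (r : nat) (f : 'cV[R]_r) (W : vconfig R r) : nat :=
  count (fun w => fval f w <= 0) W.

Definition achieved (R : realType) (r : nat) (W : vconfig R r) (k : nat) : Prop :=
  exists f : 'cV[R]_r, f != 0 /\ neg_count f W = k.

(* dual codegree: minimum of |H^- ∩ W| over all oriented linear hyperplanes.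
   All such values lie in [0, size W], so the minimum is a finite min.
   (If no hyperplane exists, i.e. r = 0, the value defaults to size W;
   the main theorem assumes r > 0.) *)
Definition codeg_dual (R : realType) (r : nat) (W : vconfig R r) : nat :=
  \big[minn/size W]_(k < (size W).+1 | `[< achieved W k >]) (k : nat).

From HB Require Import structures.
From mathcomp Require Import all_boot all_order all_algebra.
From mathcomp Require Import boolp reals.

(* Every oriented hyperplane H cuts each part V_i in at least codeg*(V_i)
   points of its closed negative side, and these counts add up to the count
   for V; so the bound holds for every value achieved on V, hence for their
   minimum. *)

Section DualCodegree.

Variables (R : realType) (r : nat).

Lemma codeg_dual_le_size (W : vconfig R r) : (codeg_dual W <= size W)%N.
Proof.
apply: (big_ind (fun y => y <= size W)%N) => //.
- by move=> x y Hx _; rewrite geq_min Hx.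
- by move=> i _; rewrite -ltnS.
Qed.

Lemma achieved_le_size (W : vconfig R r) k : achieved W k -> (k <= size W)%N.
Proof. by case=> f [_ <-]; rewrite /neg_count count_size. Qed.

Lemma codeg_dual_le_achieved (W : vconfig R r) k :
  achieved W k -> (codeg_dual W <= k)%N.
Proof.
move=> Wk; have kW : (k < (size W).+1)%N by rewrite ltnS achieved_le_size.
have : Ordinal kW \in index_enum 'I_(size W).+1 by rewrite mem_index_enum.
rewrite /codeg_dual; elim: (index_enum _) => [//|j s IHs].
rewrite in_cons big_cons => /orP[/eqP <-|/IHs kW_s].
  by rewrite asboolT // geq_minl.
by case: ifP => _ //; rewrite geq_min kW_s orbT.
Qed.

Lemma codeg_dual_ge (W : vconfig R r) n :
  (n <= size W)%N -> (forall k, achieved W k -> n <= k)%N ->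
  (n <= codeg_dual W)%N.
Proof.
move=> nW n_lb; apply: (big_ind (fun y => n <= y)%N) => //.
- by move=> x y nx ny; rewrite leq_min nx ny.
- by move=> k /asboolP /n_lb.
Qed.

End DualCodegree.

Lemma count_perm_flatten (T : eqType) (I : finType) (a : pred T)
    (s : seq T) (F : I -> seq T) :
  perm_eq s (flatten [seq F i | i <- enum I]) ->
  count a s = (\sum_i count a (F i))%N.
Proof.
move/permP->; rewrite count_flatten -map_comp sumnE big_map.
by rewrite big_enum.
Qed.

Theorem mainTheorem5 (R : realType) (r m : nat) (hr : (0 < r)%N)
    (V : vconfig R r) (Vs : 'I_m.+1 -> vconfig R r)
    (hpart : perm_eq V (flatten [seq Vs i | i <- enum 'I_m.+1])) :
  (\sum_(i < m.+1) codeg_dual (Vs i) <= codeg_dual V)%N.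
Proof.
have countV a : count a V = (\sum_(i < m.+1) count a (Vs i))%N.
  exact: count_perm_flatten.
apply: codeg_dual_ge.
- rewrite -count_predT countV; apply: leq_sum => i _.
  by rewrite count_predT codeg_dual_le_size.
- move=> k [f [f_neq0 <-]]; rewrite /neg_count countV.
  by apply: leq_sum => i _; apply: codeg_dual_le_achieved; exists f.
Qed.
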